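(* Let $r\ge 3$ be an integer. Every $\mathrm{T}_r$-free $r$-graph $\mathcal{H}$ with $\delta_{r-1}^{+}(\mathcal{H})\ge r$ is $\Sigma_r$-free; that is, there are no three edges $A,B,C\in\mathcal{H}$ with $|A\cap B|=r-1$ and $A\triangle B\subseteq C$.
   Context: An $r$-graph $\mathcal{H}$ is a collection of $r$-subsets (edges) of a finite vertex set $V(\mathcal{H})$. The shadow is $\partial\mathcal{H}=\{e\in\binom{V(\mathcal{H})}{r-1}\colon e\subseteq E \text{ for some } E\in\mathcal{H}\}$. For $e\in\partial\mathcal{H}$, $N_{\mathcal{H}}(e)=\{v\in V(\mathcal{H})\colon e\cup\{v\}\in\mathcal{H}\}$. The minimum positive codegree is $\delta_{r-1}^{+}(\mathcal{H})=\min\{|N_{\mathcal{H}}(e)|\colon e\in\partial\mathcal{H}\}$. The $r$-uniform generalized triangle is $\mathrm{T}_r=\{\{1,\ldots,r-1,r\},\{1,\ldots,r-1,r+1\},\{r,r+1,\ldots,2r-1\}\}$; $\mathcal{H}$ is $\mathrm{T}_r$-free if it contains no subhypergraph isomorphic to $\mathrm{T}_r$. $\Sigma_r$ denotes the family of $r$-graphs consisting of three edges $A,B,C$ with $|A\cap B|=r-1$ and $A\triangle B\subseteq C$ (symmetric difference). *)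

From mathcomp Require Import all_boot.
Set Implicit Arguments. Unset Strict Implicit. Unset Printing Implicit Defensive.

Definition uniform (T : finType) (r : nat) (H : {set {set T}}) : Prop :=
  forall E, E \in H -> #|E| = r.

Definition shadow (T : finType) (r : nat) (H : {set {set T}}) : {set {set T}} :=
  [set e : {set T} | (#|e| == r.-1) && [exists E in H, e \subset E]].

Definition nbhd (T : finType) (H : {set {set T}}) (e : {set T}) : {set T} :=
  [set v | v |: e \in H].

Definition min_pos_codeg_ge (T : finType) (r : nat) (H : {set {set T}}) (k : nat) : Prop :=
  forall e, e \in shadow r H -> k <= #|nbhd H e|.

(* The generalized triangle T_r on vertex set {0,...,2r-2} (0-indexed):
   E1 = {0,...,r-2} ∪ {r-1}, E2 = {0,...,r-2} ∪ {r}, E3 = {r-1,...,2r-2}. *)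
Definition Tr_edge1 (r : nat) : {set 'I_(2*r-1)} := [set i : 'I_(2*r-1) | i < r].
Definition Tr_edge2 (r : nat) : {set 'I_(2*r-1)} :=
  [set i : 'I_(2*r-1) | (i < r - 1) || (i == r :> nat)].
Definition Tr_edge3 (r : nat) : {set 'I_(2*r-1)} := [set i : 'I_(2*r-1) | r - 1 <= i].

Definition Tr_free (T : finType) (r : nat) (H : {set {set T}}) : Prop :=
  ~ exists f : 'I_(2*r-1) -> T,
      [/\ injective f, f @: Tr_edge1 r \in H, f @: Tr_edge2 r \in H
        & f @: Tr_edge3 r \in H].

Definition Sigma_free (T : finType) (r : nat) (H : {set {set T}}) : Prop :=
  ~ exists A B C, [/\ A \in H, B \in H, C \in H,
      #|A :&: B| = r.-1 & (A :\: B) :|: (B :\: A) \subset C].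

From mathcomp Require Import all_boot zify.

(* Suppose A = S + a, B = S + b with |S| = r - 1 and a, b in an edge C.  If C
   meets S in some x, the (r-1)-set C - x lies in the shadow, so it has at
   least r > |S| neighbours, one of which, v, avoids S; the edge C - x + v still
   contains C \ S but meets S in fewer vertices.  Iterating gives an edge C'
   containing a and b and disjoint from S, and then A, B, C' form a copy of T_r. *)

Set Implicit Arguments.
Unset Strict Implicit.
Unset Printing Implicit Defensive.

Section IndexSets.
Variable T : finType.
Implicit Types (s : seq T) (x : T).

Lemma imset_nth_index s x0 n (P : pred nat) : size s = n -> uniq s ->
  (fun i : 'I_n => nth x0 s i) @: [set i : 'I_n | P i] = [set x in s | P (index x s)].
Proof.
move=> size_s uniq_s; apply/setP => x; rewrite inE; apply/imsetP/andP.
- case=> i; rewrite inE => Pi ->.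
  by rewrite mem_nth ?size_s // index_uniq ?size_s.
- case=> xs Px; have ltxn : index x s < n by rewrite -size_s index_mem.
  by exists (Ordinal ltxn); rewrite ?inE //= nth_index.
Qed.

Lemma set_index_ltn s k : [set x in s | index x s < k] = [set x in take k s].
Proof.
apply/setP => x; rewrite !inE; case: (boolP (x \in s)) => [xs|xNs] /=.
  by rewrite in_take.
by apply/esym; apply: contraNF xNs; apply: mem_take.
Qed.

Lemma in_drop s x k : uniq s -> x \in s -> (x \in drop k s) = (k <= index x s).
Proof.
move=> uniq_s xs.
have /and3P[_ /hasPn take_drop _] : [&& uniq (take k s),
    ~~ has (mem (take k s)) (drop k s) & uniq (drop k s)].
  by rewrite -cat_uniq cat_take_drop.
rewrite leqNgt -in_take //; apply/idP/idP => [xd|xNtake]; first exact: take_drop.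
by move: xs; rewrite -{1}(cat_take_drop k s) mem_cat (negbTE xNtake).
Qed.

Lemma set_index_geq s k : uniq s -> [set x in s | k <= index x s] = [set x in drop k s].
Proof.
move=> uniq_s; apply/setP => x; rewrite !inE.
case: (boolP (x \in s)) => [xs|xNs] /=; first by rewrite in_drop.
by apply/esym; apply: contraNF xNs; apply: mem_drop.
Qed.

Lemma set_index_eq s x0 k : uniq s -> k < size s ->
  [set x in s | index x s == k] = [set nth x0 s k].
Proof.
move=> uniq_s lt_k; apply/setP => x; rewrite !inE.
apply/andP/eqP => [[xs /eqP <-]|->]; first by rewrite nth_index.
by rewrite mem_nth // index_uniq.
Qed.

End IndexSets.

Lemma setI_cardS_setU1 (T : finType) (A B : {set T}) : #|A| = #|A :&: B|.+1 ->
  exists2 a, a \notin B & A = a |: (A :&: B).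
Proof.
move=> cardA; have /cards1P[a AB_a] : #|A :\: B| == 1.
  by have := cardsID B A; rewrite cardA -addn1 => /addnI ->.
have /setDP[_ aNB] : a \in A :\: B by rewrite AB_a set11.
by exists a; rewrite // -AB_a setUC setID.
Qed.

Lemma symdiff_disjoint_setI (T : finType) (A B : {set T}) :
  [disjoint (A :\: B) :|: (B :\: A) & A :&: B].
Proof.
rewrite -setI_eq0; apply/eqP/setP => x; rewrite !inE.
by case: (x \in A); case: (x \in B).
Qed.

(* The vertices 0, ..., 2r-2 of T_r are labelled by s ++ [:: a, b & t] in order. *)
Lemma Tr_copy_of_seq (T : finType) (r : nat) (H : {set {set T}})
    (s t : seq T) (a b : T) :
  1 < r -> size s = r.-1 -> size t = r - 2 -> uniq (s ++ [:: a, b & t]) ->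
  [set x in a :: s] \in H -> [set x in b :: s] \in H -> [set x in [:: a, b & t]] \in H ->
  ~ Tr_free r H.
Proof.
move=> r_gt1 size_s size_t uniqL HA HB HC; apply.
pose L := s ++ [:: a, b & t].
have size_L : size L = 2 * r - 1 by rewrite size_cat /= size_s size_t; lia.
exists (fun i => nth a L i); split.
- by move=> i j /eqP; rewrite nth_uniq ?size_L // => /eqP /val_inj.
- rewrite /Tr_edge1 (@imset_nth_index _ L a _ (fun i => i < r) size_L uniqL).
  rewrite set_index_ltn take_cat size_s.
  rewrite ltnNge leq_pred /= (_ : r - r.-1 = 1) /=; last lia.
  suff -> : [set x in s ++ [:: a]] = [set x in a :: s] by [].
  by apply/setP => x; rewrite !inE mem_cat mem_seq1 orbC.
- rewrite /Tr_edge2.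
  rewrite (@imset_nth_index _ L a _ (fun i => (i < r - 1) || (i == r)) size_L uniqL).
  have -> : [set x in L | (index x L < r - 1) || (index x L == r)] =
            [set x in L | index x L < r - 1] :|: [set x in L | index x L == r].
    by apply/setP => x; rewrite !inE andb_orr.
  rewrite set_index_ltn (@set_index_eq _ L a r uniqL) ?size_L; last lia.
  rewrite take_cat size_s subn1 ltnn subnn take0 cats0.
  rewrite nth_cat size_s ltnNge leq_pred /= (_ : r - r.-1 = 1) /=; last lia.
  suff -> : [set x in s] :|: [set b] = [set x in b :: s] by [].
  by apply/setP => x; rewrite !inE orbC.
- rewrite /Tr_edge3 (@imset_nth_index _ L a _ (fun i => r - 1 <= i) size_L uniqL).
  by rewrite set_index_geq // drop_cat size_s subn1 ltnn subnn drop0.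
Qed.

Section Exchange.
Variables (T : finType) (r k : nat) (H : {set {set T}}).
Hypotheses (unifH : uniform r H) (codH : min_pos_codeg_ge r H k).

Lemma edge_exchange (C S : {set T}) x : C \in H -> x \in C -> #|S| < k ->
  exists2 v, v \notin S & v |: (C :\ x) \in H.
Proof.
move=> HC xC ltSk.
have card_Cx : #|C :\ x| = r.-1 by rewrite -(unifH HC) (cardsD1 x C) xC.
have Cx_shadow : C :\ x \in shadow r H.
  by rewrite inE card_Cx eqxx; apply/existsP; exists C; rewrite HC subD1set.
have [nbhd_sub|/subsetPn[v]] := boolP (nbhd H (C :\ x) \subset S).
  by have := leq_trans (codH Cx_shadow) (subset_leq_card nbhd_sub); rewrite leqNgt ltSk.
by rewrite inE; exists v.
Qed.

Lemma exists_edge_avoiding (C S : {set T}) : C \in H -> #|S| < k ->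
  exists2 C', C' \in H & (C :\: S \subset C') && [disjoint C' & S].
Proof.
move=> HC ltSk; have [n] := ubnP #|C :&: S|.
elim: n C HC => // n IHn C HC ltCSn.
have [CS0|[x]] := set_0Vmem (C :&: S).
  by exists C => //; rewrite subsetDl -setI_eq0 CS0 eqxx.
move=> /setIP[xC xS].
have [v vNS HC1] := edge_exchange HC xC ltSk.
set C1 := v |: (C :\ x) in HC1 *.
have C1S_sub : C1 :&: S \subset (C :&: S) :\ x.
  apply/subsetP => y; rewrite !inE => /andP[/orP[/eqP->|/andP[yx yC]] yS].
    by rewrite yS in vNS.
  by rewrite yx yC yS.
have ltC1S : #|C1 :&: S| < n.
  have xCS : x \in C :&: S by rewrite inE xC xS.
  exact: leq_trans (proper_card (sub_proper_trans C1S_sub (properD1 xCS))) ltCSn.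
have [C' HC' /andP[sub disj]] := IHn C1 HC1 ltC1S.
exists C' => //; rewrite disj andbT; apply: subset_trans sub.
apply/subsetP => y /setDP[yC yNS].
have yx : y != x by apply: contraNneq yNS => ->.
by rewrite !inE yNS yC yx /= orbT.
Qed.

End Exchange.

Lemma avoiding_Sigma_not_Tr_free (T : finType) (r : nat) (H : {set {set T}})
    (A B C : {set T}) :
  1 < r -> uniform r H -> A \in H -> B \in H -> C \in H -> #|A :&: B| = r.-1 ->
  (A :\: B) :|: (B :\: A) \subset C -> [disjoint C & A :&: B] -> ~ Tr_free r H.
Proof.
move=> r_gt1 unifH HA HB HC cardS symC disjCS; set S := A :&: B in cardS disjCS.
have [a aNB eA] : exists2 a, a \notin B & A = a |: S.
  by apply: setI_cardS_setU1; rewrite (unifH _ HA) cardS; lia.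
have [b bNA eB] : exists2 b, b \notin A & B = b |: S.
  by rewrite /S setIC; apply: setI_cardS_setU1; rewrite setIC (unifH _ HB) cardS; lia.
have aC : a \in C by apply: (subsetP symC); rewrite !inE eA setU11 aNB.
have bC : b \in C by apply: (subsetP symC); rewrite !inE eB setU11 bNA orbT.
have ab : a != b by apply: contraNneq aNB => ->; rewrite eB setU11.
set R := C :\: [set a; b].
have eC : C = [set x in [:: a, b & enum R]].
  apply/setP => x; rewrite !inE mem_enum !inE.
  by case: eqP => [->|_]; case: eqP => [->|_].
have cardR : #|R| = r - 2.
  rewrite cardsD (unifH _ HC) (setIidPr _) ?cards2 ?ab //.
  by apply/subsetP => x; rewrite !inE => /orP[]/eqP->.
apply: (@Tr_copy_of_seq _ r H (enum S) (enum R) a b) => //.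
- by rewrite -cardE.
- by rewrite -cardE.
- rewrite cat_uniq enum_uniq; apply/and3P; split => //.
    apply/hasPn => x xL; rewrite mem_enum (disjointFr disjCS) //.
    by rewrite eC inE.
  have [aNR bNR] : a \notin enum R /\ b \notin enum R.
    by rewrite !mem_enum !inE !eqxx orbT.
  by rewrite /= in_cons negb_or ab aNR bNR enum_uniq.
- rewrite (_ : [set x in a :: enum S] = A) //.
  by rewrite eA; apply/setP => x; rewrite in_setU1 in_set in_cons mem_enum.
- rewrite (_ : [set x in b :: enum S] = B) //.
  by rewrite eB; apply/setP => x; rewrite in_setU1 in_set in_cons mem_enum.
- by rewrite -eC.
Qed.

Theorem proposition2p1 (r : nat) (T : finType) (H : {set {set T}}) :
  3 <= r -> uniform r H -> Tr_free r H -> min_pos_codeg_ge r H r ->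
  Sigma_free r H.
Proof.
move=> r_ge3 unifH TrH codH [A [B [C [HA HB HC cardAB symC]]]].
have cardS_lt : #|A :&: B| < r by rewrite cardAB; lia.
have [C' HC' /andP[subC' disjC']] := exists_edge_avoiding unifH codH HC cardS_lt.
apply: (avoiding_Sigma_not_Tr_free _ unifH HA HB HC' cardAB _ disjC') TrH; first lia.
by apply: subset_trans subC'; rewrite subsetD symC symdiff_disjoint_setI.
Qed.
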